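(* Let $d,K\ge1$, $\lambda>0$. For each arm $a\in[K]$ let $X_a\in\mathbb{R}^{m_a\times d}$, $V_a=X_a^\top X_a+\lambda I$, and let $\hat\theta_a,\hat\theta'_a\in\mathbb{R}^d$ be the pre-attack and post-attack parameter estimates and $\alpha_a,\alpha'_a\in\mathbb{R}$ the corresponding pre-attack and post-attack exploration parameters (independent of the context). For $x\in\mathbb{R}^d$ define the pre-attack chosen arm $a(x)=\operatorname{argmax}_{a\in[K]}\{x^\top\hat\theta_a+\alpha_a\|x\|_{V_a^{-1}}\}$ and post-attack chosen arm $a'(x)=\operatorname{argmax}_{a\in[K]}\{x^\top\hat\theta'_a+\alpha'_a\|x\|_{V_a^{-1}}\}$, where $\|x\|_{V_a^{-1}}=\sqrt{x^\top V_a^{-1}x}$. Let $x\in\mathbb{R}^d$ be such that both maximizers are unique and $a(x)\neq a'(x)$. Then for every $c>0$, $a(cx)\neq a'(cx)$; moreover $a'(cx)=a'(x)$.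
   Context: Linear contextual bandit with UCB arm selection; the attack modifies historical rewards only, so $X_a$ and $V_a$ are the same before and after the attack, while the ridge estimates $\hat\theta_a$ change (e.g. post-attack $\hat\theta'_a=V_a^{-1}X_a^\top(y_a+\Delta_a)$). *)

From HB Require Import structures.
From mathcomp Require Import all_boot all_order all_algebra.
Set Implicit Arguments. Unset Strict Implicit. Unset Printing Implicit Defensive.
Import Order.TTheory GRing.Theory Num.Theory.
Local Open Scope ring_scope.

Definition Vmat (R : rcfType) (d m : nat) (X : 'M[R]_(m, d)) (lam : R) : 'M[R]_d :=
  X^T *m X + lam%:M.

Definition wnorm (R : rcfType) (d : nat) (A : 'M[R]_d) (x : 'cV[R]_d) : R :=
  Num.sqrt ((x^T *m A *m x) ord0 ord0).

Definition ucb (R : rcfType) (d : nat) (V : 'M[R]_d) (th : 'cV[R]_d) (al : R)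
  (x : 'cV[R]_d) : R :=
  (x^T *m th) ord0 ord0 + al * wnorm (invmx V) x.

Definition is_argmax (R : rcfType) (K : nat) (f : 'I_K -> R) (a : 'I_K) : Prop :=
  forall b, f b <= f a.

Definition is_unique_argmax (R : rcfType) (K : nat) (f : 'I_K -> R) (a : 'I_K) : Prop :=
  forall b, b != a -> f b < f a.

From HB Require Import structures.
From mathcomp Require Import all_boot all_order all_algebra.
Set Implicit Arguments. Unset Strict Implicit. Unset Printing Implicit Defensive.
Import Order.TTheory GRing.Theory Num.Theory.
Local Open Scope ring_scope.

(* Both the linear term and the weighted norm of the UCB index are positively
   homogeneous in the context, so scaling the context by c > 0 scales every
   arm's index by c and leaves both argmaxes unchanged. *)

Lemma wnormZ (R : rcfType) (d : nat) (A : 'M[R]_d) (c : R) (x : 'cV[R]_d) :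
  wnorm A (c *: x) = `|c| * wnorm A x.
Proof.
rewrite /wnorm [(c *: x)^T]linearZ -!scalemxAl -scalemxAr !mxE mulrA -expr2.
by rewrite sqrtrM ?sqr_ge0 // sqrtr_sqr.
Qed.

Lemma ucbZ (R : rcfType) (d : nat) (V : 'M[R]_d) (th : 'cV[R]_d) (al c : R)
    (x : 'cV[R]_d) :
  0 <= c -> ucb V th al (c *: x) = c * ucb V th al x.
Proof.
move=> c_ge0; rewrite /ucb wnormZ ger0_norm // [(c *: x)^T]linearZ -scalemxAl mxE.
by rewrite mulrDr mulrCA.
Qed.

Lemma is_argmax_ucbZ (R : rcfType) (d K : nat) (V : 'I_K -> 'M[R]_d)
    (th : 'I_K -> 'cV[R]_d) (al : 'I_K -> R) (c : R) (x : 'cV[R]_d) (b : 'I_K) :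
  0 < c ->
  is_argmax (fun a => ucb (V a) (th a) (al a) (c *: x)) b ->
  is_argmax (fun a => ucb (V a) (th a) (al a) x) b.
Proof.
move=> c_gt0 b_max a.
by rewrite -(ler_pM2l c_gt0) -!ucbZ ?(ltW c_gt0) //; apply: b_max.
Qed.

Lemma is_unique_argmax_eq (R : rcfType) (K : nat) (f : 'I_K -> R) (a b : 'I_K) :
  is_unique_argmax f a -> is_argmax f b -> b = a.
Proof.
move=> fa_umax fb_max; apply/eqP; apply: contraTT (fb_max a) => ba.
by rewrite -ltNge fa_umax.
Qed.

Theorem proposition1 (R : rcfType) (d K : nat) (lam : R)
  (m : 'I_K -> nat) (X : forall a : 'I_K, 'M[R]_(m a, d))
  (th th' : 'I_K -> 'cV[R]_d) (al al' : 'I_K -> R) (x : 'cV[R]_d)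
  (a0 a1 : 'I_K) :
  (1 <= d)%N -> (1 <= K)%N -> 0 < lam ->
  is_unique_argmax (fun a => ucb (Vmat (X a) lam) (th a) (al a) x) a0 ->
  is_unique_argmax (fun a => ucb (Vmat (X a) lam) (th' a) (al' a) x) a1 ->
  a0 != a1 ->
  forall c : R, 0 < c ->
  forall b0 b1 : 'I_K,
    is_argmax (fun a => ucb (Vmat (X a) lam) (th a) (al a) (c *: x)) b0 ->
    is_argmax (fun a => ucb (Vmat (X a) lam) (th' a) (al' a) (c *: x)) b1 ->
    b0 != b1 /\ b1 = a1.
Proof.
move=> _ _ _ a0_umax a1_umax a01 c c_gt0 b0 b1 b0_max b1_max.
rewrite (is_unique_argmax_eq a0_umax (is_argmax_ucbZ c_gt0 b0_max)).
by rewrite (is_unique_argmax_eq a1_umax (is_argmax_ucbZ c_gt0 b1_max)).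
Qed.
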